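(* Let $\mathcal V$ be a subvariety of $\mathsf V(S_7)$. Then $S_c(a)\notin\mathcal V$ if and only if $\mathcal V$ satisfies the identity $x^2\approx x$.
   Context: $S_7$ is the ai-semiring on $\{\infty,a,1\}$ with $x+x=x$, $x+y=\infty$ for $x\neq y$, and commutative multiplication with $\infty$ a zero, $a\cdot a=\infty$, $a\cdot 1=a$, $1\cdot1=1$. $\mathsf V(S_7)$ is the variety it generates. $S_c(a)$ is the two-element ai-semiring $\{a,\infty\}$ with $a+\infty=\infty$, $x+x=x$, and all products equal to $\infty$. *)

Record AISemiring := {
  car :> Type;
  add : car -> car -> car;
  mul : car -> car -> car;
  addA : forall x y z, add x (add y z) = add (add x y) z;
  addC : forall x y, add x y = add y x;
  addI : forall x, add x x = x;
  mulA : forall x y z, mul x (mul y z) = mul (mul x y) z;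
  mulDl : forall x y z, mul (add x y) z = add (mul x z) (mul y z);
  mulDr : forall x y z, mul x (add y z) = add (mul x y) (mul x z)
}.

Inductive term : Type :=
| Var : nat -> term
| Add : term -> term -> term
| Mul : term -> term -> term.

Fixpoint eval (S : AISemiring) (v : nat -> car S) (t : term) : car S :=
  match t with
  | Var n => v n
  | Add t1 t2 => add S (eval S v t1) (eval S v t2)
  | Mul t1 t2 => mul S (eval S v t1) (eval S v t2)
  end.

Definition identity := (term * term)%type.

Definition satisfies (S : AISemiring) (e : identity) : Prop :=
  forall v : nat -> car S, eval S v (fst e) = eval S v (snd e).

Definition models (S : AISemiring) (Sigma : identity -> Prop) : Prop :=
  forall e, Sigma e -> satisfies S e.

Definition is_variety (V : AISemiring -> Prop) : Prop :=
  exists Sigma : identity -> Prop, forall S, V S <-> models S Sigma.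

(** Equational theory of an algebra, and the variety it generates:
    the smallest equational class containing S, i.e. Mod(Id(S)). *)
Definition Id (S : AISemiring) : identity -> Prop := fun e => satisfies S e.
Definition Vgen (S : AISemiring) : AISemiring -> Prop := fun T => models T (Id S).

Definition class_satisfies (V : AISemiring -> Prop) (e : identity) : Prop :=
  forall S, V S -> satisfies S e.

Definition sq_idem : identity := (Mul (Var 0) (Var 0), Var 0).

Inductive S7_car : Type := S7inf | S7a | S7one.

Definition S7_eqb (x y : S7_car) : bool :=
  match x, y with
  | S7inf, S7inf | S7a, S7a | S7one, S7one => true
  | _, _ => false
  end.

Definition S7_add (x y : S7_car) : S7_car := if S7_eqb x y then x else S7inf.

Definition S7_mul (x y : S7_car) : S7_car :=
  match x, y with
  | S7one, S7one => S7one
  | S7a, S7one | S7one, S7a => S7a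
  | _, _ => S7inf
  end.

Definition S7 : AISemiring.
Proof.
  refine (@Build_AISemiring S7_car S7_add S7_mul _ _ _ _ _ _);
  intros; repeat match goal with x : S7_car |- _ => destruct x end; reflexivity.
Defined.

Inductive Sc_car : Type := Sca | Scinf.

Definition Sc_add (x y : Sc_car) : Sc_car :=
  match x, y with
  | Sca, Sca => Sca
  | _, _ => Scinf
  end.

Definition Sc_mul (x y : Sc_car) : Sc_car := Scinf.

Definition Sc_a : AISemiring.
Proof.
  refine (@Build_AISemiring Sc_car Sc_add Sc_mul _ _ _ _ _ _);
  intros; repeat match goal with x : Sc_car |- _ => destruct x end; reflexivity.
Defined.

From Stdlib Require Import Classical Arith Bool.

(* Let S in V fail x^2 = x.  Every identity u = w of V then holds in S_c(a).
   If exactly one side, say u, contains a product: S_7 satisfies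
   u(x,...,x) = x^2, hence so does S, while w(x,...,x) = x, so S would
   satisfy x^2 = x.  If neither side contains a product but a variable n
   occurs in u only: valuing n by a and every other variable by b and adding
   b to both sides gives a + b = b, so S is trivial.  In every remaining case
   u = w is valid in S_c(a), where a term takes the value a exactly when it
   has no product and all its variables are valued a.  Conversely
   a . a = oo <> a in S_c(a). *)

Fixpoint has_mul (t : term) : bool :=
  match t with
  | Var _ => false
  | Add t1 t2 => has_mul t1 || has_mul t2
  | Mul _ _ => true
  end.

Fixpoint occurs (n : nat) (t : term) : bool :=
  match t with
  | Var m => Nat.eqb m n
  | Add t1 t2 | Mul t1 t2 => occurs n t1 || occurs n t2
  end.

Fixpoint collapse_vars (t : term) : term :=
  match t with
  | Var _ => Var 0
  | Add t1 t2 => Add (collapse_vars t1) (collapse_vars t2)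
  | Mul t1 t2 => Mul (collapse_vars t1) (collapse_vars t2)
  end.

Lemma eval_collapse_vars (S : AISemiring) (v : nat -> S) (t : term) :
  eval S v (collapse_vars t) = eval S (fun _ => v 0) t.
Proof. induction t; simpl; congruence. Qed.

Lemma eval_const_additive (S : AISemiring) (s : S) (t : term) :
  has_mul t = false -> eval S (fun _ => s) t = s.
Proof.
  induction t as [n | t1 IH1 t2 IH2 | t1 _ t2 _]; simpl; try discriminate; auto.
  intros [H1 H2]%orb_false_iff. rewrite IH1, IH2 by assumption. apply addI.
Qed.

Lemma add_addr_distr (S : AISemiring) (x y b : S) :
  add S (add S x y) b = add S (add S x b) (add S y b).
Proof.
  rewrite <- !addA, (addA S b y b), (addC S b y), <- (addA S y b b), addI.
  reflexivity.
Qed.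

Lemma eval_additive_point (S : AISemiring) (a b : S) (n : nat) (t : term) :
  has_mul t = false ->
  add S (eval S (fun m => if Nat.eqb m n then a else b) t) b =
  if occurs n t then add S a b else b.
Proof.
  induction t as [m | t1 IH1 t2 IH2 | t1 _ t2 _]; simpl; try discriminate.
  - intros _. destruct (Nat.eqb m n); [reflexivity | apply addI].
  - intros [H1 H2]%orb_false_iff.
    rewrite add_addr_distr, IH1, IH2 by assumption.
    destruct (occurs n t1), (occurs n t2); simpl;
      rewrite ?addI, <- ?addA, ?addI, ?(addA S b a b), ?(addC S b a),
        <- ?(addA S a b b), ?addI; reflexivity.
Qed.

Lemma unbalanced_additive_identity_trivial (S : AISemiring) (u w : term) (n : nat) :
  has_mul u = false -> has_mul w = false ->
  occurs n u = true -> occurs n w = false ->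
  satisfies S (u, w) -> forall a b : S, a = b.
Proof.
  intros Hu Hw Ou Ow HS.
  assert (absorb : forall a b : S, add S a b = b).
  { intros a b. specialize (HS (fun m => if Nat.eqb m n then a else b)).
    simpl in HS.
    pose proof (eval_additive_point S a b n u Hu) as Eu.
    pose proof (eval_additive_point S a b n w Hw) as Ew.
    rewrite Ou in Eu. rewrite Ow in Ew. congruence. }
  intros a b. rewrite <- (absorb b a), addC. apply absorb.
Qed.

Lemma S7_eval_const (c : S7_car) (t : term) :
  eval S7 (fun _ => c) t = if has_mul t then S7_mul c c else c.
Proof.
  induction t; simpl; [reflexivity | |]; rewrite IHt1, IHt2;
    destruct (has_mul t1), (has_mul t2), c; reflexivity.
Qed.

Lemma Vgen_S7_eval_const_mul (S : AISemiring) (s : S) (t : term) :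
  Vgen S7 S -> has_mul t = true -> eval S (fun _ => s) t = mul S s s.
Proof.
  intros HS Ht.
  assert (Hsq : satisfies S (collapse_vars t, Mul (Var 0) (Var 0))).
  { apply HS. intro v. simpl. rewrite eval_collapse_vars, S7_eval_const, Ht.
    reflexivity. }
  specialize (Hsq (fun _ => s)). simpl in Hsq.
  rewrite eval_collapse_vars in Hsq. exact Hsq.
Qed.

Lemma Vgen_S7_mixed_identity_sq_idem (S : AISemiring) (u w : term) :
  Vgen S7 S -> has_mul u = true -> has_mul w = false ->
  satisfies S (u, w) -> satisfies S sq_idem.
Proof.
  intros HS Hu Hw Huw v. simpl.
  specialize (Huw (fun _ => v 0)). simpl in Huw.
  rewrite (Vgen_S7_eval_const_mul S (v 0) u HS Hu),
    (eval_const_additive S (v 0) w Hw) in Huw.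
  exact Huw.
Qed.

Lemma Sc_eval_mul (v : nat -> Sc_car) (t : term) :
  has_mul t = true -> eval Sc_a v t = Scinf.
Proof.
  induction t; simpl; try discriminate; [|reflexivity].
  intros [H | H]%orb_true_iff.
  - rewrite IHt1 by assumption. reflexivity.
  - rewrite IHt2 by assumption. destruct (eval Sc_a v t1); reflexivity.
Qed.

Lemma Sc_eval_additive (v : nat -> Sc_car) (t : term) :
  has_mul t = false ->
  (eval Sc_a v t = Sca <-> forall m, occurs m t = true -> v m = Sca).
Proof.
  induction t as [n | t1 IH1 t2 IH2 | t1 _ t2 _]; simpl; try discriminate.
  - intros _. split.
    + intros H m ->%Nat.eqb_eq. exact H.
    + intro H. apply H, Nat.eqb_refl.
  - intros [H1 H2]%orb_false_iff. split.
    + intros H m Hm.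
      destruct (eval Sc_a v t1) eqn:E1, (eval Sc_a v t2) eqn:E2; try discriminate.
      apply orb_true_iff in Hm as [Hm | Hm];
        [apply (IH1 H1) | apply (IH2 H2)]; assumption.
    + intro H.
      rewrite (proj2 (IH1 H1)), (proj2 (IH2 H2)); [reflexivity | |];
        intros m Hm; apply H; rewrite Hm; auto using orb_true_r.
Qed.

Lemma Sc_satisfies_mul_identity (u w : term) :
  has_mul u = true -> has_mul w = true -> satisfies Sc_a (u, w).
Proof. intros Hu Hw v. simpl. rewrite !Sc_eval_mul; auto. Qed.

Lemma Sc_satisfies_balanced_additive_identity (u w : term) :
  has_mul u = false -> has_mul w = false ->
  (forall m, occurs m u = occurs m w) -> satisfies Sc_a (u, w).
Proof.
  intros Hu Hw Hocc v. simpl.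
  pose proof (Sc_eval_additive v u Hu) as Fu.
  pose proof (Sc_eval_additive v w Hw) as Fw.
  destruct (eval Sc_a v u), (eval Sc_a v w); try reflexivity.
  - symmetry. apply Fw. intros m Hm. apply Fu; [reflexivity | congruence].
  - apply Fu. intros m Hm. apply Fw; [reflexivity | congruence].
Qed.

Lemma Sc_satisfies_of_Vgen_S7 (S : AISemiring) (e : identity) :
  Vgen S7 S -> ~ satisfies S sq_idem -> satisfies S e -> satisfies Sc_a e.
Proof.
  destruct e as [u w]. intros HS Hsq Huw.
  assert (Hwu : satisfies S (w, u)) by (intro v; symmetry; apply Huw).
  destruct (has_mul u) eqn:Hu, (has_mul w) eqn:Hw.
  - apply Sc_satisfies_mul_identity; assumption.
  - exfalso. exact (Hsq (Vgen_S7_mixed_identity_sq_idem S u w HS Hu Hw Huw)).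
  - exfalso. exact (Hsq (Vgen_S7_mixed_identity_sq_idem S w u HS Hw Hu Hwu)).
  - destruct (classic (forall m, occurs m u = occurs m w)) as [Hocc | Hocc].
    + apply Sc_satisfies_balanced_additive_identity; assumption.
    + exfalso. apply not_all_ex_not in Hocc as [n Hn]. apply Hsq.
      assert (trivial : forall a b : S, a = b).
      { destruct (occurs n u) eqn:Ou, (occurs n w) eqn:Ow; try congruence.
        - exact (unbalanced_additive_identity_trivial S u w n Hu Hw Ou Ow Huw).
        - exact (unbalanced_additive_identity_trivial S w u n Hw Hu Ow Ou Hwu). }
      intro v. apply trivial.
Qed.

Lemma Sc_not_sq_idem : ~ satisfies Sc_a sq_idem.
Proof. intro H. discriminate (H (fun _ => Sca)). Qed.

Theorem proposition3p3 :
  forall V : AISemiring -> Prop,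
    is_variety V ->
    (forall S, V S -> Vgen S7 S) ->
    (~ V Sc_a <-> class_satisfies V sq_idem).
Proof.
  intros V [Sigma HSigma] HV. split.
  - intros HnSc. apply NNPP. intros Hnsat. apply HnSc, HSigma.
    apply not_all_ex_not in Hnsat as [S HS].
    apply imply_to_and in HS as [HVS Hsq].
    intros e He.
    apply (Sc_satisfies_of_Vgen_S7 S e (HV S HVS) Hsq).
    exact (proj1 (HSigma S) HVS e He).
  - intros Hsat HSc. exact (Sc_not_sq_idem (Hsat Sc_a HSc)).
Qed.
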